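(* Let $f:\{0,1\}^n\to\mathbb{R}$ and suppose $\{x,x+\mathbf{e}_i,x+\mathbf{e}_j,x+\mathbf{e}_i+\mathbf{e}_j\}$ is a violated square of $f$. Then it is possible to decrease all the values of $f$ either on $\{y: y\le x\}$ or on $\{y : y \ge x+\mathbf{e}_i+\mathbf{e}_j\}$ by a common constant so that, in the resulting function, the square $\{x,x+\mathbf{e}_i,x+\mathbf{e}_j,x+\mathbf{e}_i+\mathbf{e}_j\}$ is no longer violated and no square that was not violated in $f$ becomes violated.
   Context: $\mathbf{e}_i$ denotes the $i$-th standard basis vector of $\{0,1\}^n$ and $\le$ is the coordinatewise order. A square is a set $\{x, x+\mathbf{e}_i, x+\mathbf{e}_j, x+\mathbf{e}_i+\mathbf{e}_j\}$ with $i\neq j$, $x_i=x_j=0$; it is violated (for $f$) if $f(x)+f(x+\mathbf{e}_i+\mathbf{e}_j) > f(x+\mathbf{e}_i)+f(x+\mathbf{e}_j)$. *)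

From HB Require Import structures.
From mathcomp Require Import all_boot all_order all_algebra.
Set Implicit Arguments. Unset Strict Implicit. Unset Printing Implicit Defensive.
Import Order.TTheory GRing.Theory Num.Theory.
Local Open Scope ring_scope.

(* The Boolean cube {0,1}^n : a point is a function 'I_n -> bool
   (true = 1, false = 0). *)
Definition cube (n : nat) := {ffun 'I_n -> bool}.

(* x + e_i, used only when x_i = 0: set coordinate i to 1. *)
Definition adde n (x : cube n) (i : 'I_n) : cube n :=
  [ffun k => if k == i then true else x k].

Definition cle n (x y : cube n) : bool := [forall k, x k ==> y k].

Definition violated (R : realFieldType) n (f : cube n -> R)
    (x : cube n) (i j : 'I_n) : Prop :=
  [/\ i != j, x i = false, x j = false &
      f (adde x i) + f (adde x j) < f x + f (adde (adde x i) j)].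

Definition decr_on (R : realFieldType) n (f : cube n -> R)
    (S : cube n -> bool) (c : R) : cube n -> R :=
  fun y => if S y then f y - c else f y.

From HB Require Import structures.
From mathcomp Require Import all_boot all_order all_algebra.
From mathcomp Require Import lra.
Set Implicit Arguments. Unset Strict Implicit. Unset Printing Implicit Defensive.
Import Order.TTheory GRing.Theory Num.Theory.
Local Open Scope ring_scope.

(* The principal down-set S = {y | y <= x} is closed under going down and
   under joins, so it meets every square in the empty set, the bottom corner,
   a bottom edge or the whole square.  Lowering f by c >= 0 on S therefore
   lowers the defect f(y) + f(y+e_k+e_l) - f(y+e_k) - f(y+e_l) of each square
   by 0 or c, and never raises it; taking c to be the defect of the given
   violated square (which S meets only in its bottom corner x) makes that
   defect exactly 0. *)

Definition defect (R : realFieldType) n (f : cube n -> R) (y : cube n)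
    (k l : 'I_n) : R :=
  f y + f (adde (adde y k) l) - f (adde y k) - f (adde y l).

Lemma violatedE (R : realFieldType) n (f : cube n -> R) y k l :
  violated f y k l <-> [/\ k != l, y k = false, y l = false & 0 < defect f y k l].
Proof.
rewrite /violated /defect.
by split=> -[kl yk yl h]; split=> //; lra.
Qed.

Lemma adde_comm n (y : cube n) k l : adde (adde y k) l = adde (adde y l) k.
Proof. by apply/ffunP=> m; rewrite !ffunE; case: (m == k); case: (m == l). Qed.

Lemma cle_adde n (y x : cube n) k : cle (adde y k) x -> cle y x.
Proof.
move/forallP=> H; apply/forallP=> m; have := H m; rewrite ffunE.
by case: (m == k) => //= hx; apply/implyP.
Qed.

Lemma cle_adde_join n (y x : cube n) k l :
  cle (adde y k) x -> cle (adde y l) x -> cle (adde (adde y k) l) x.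
Proof.
move/forallP=> H1 /forallP H2; apply/forallP=> m.
by have := H1 m; have := H2 m; rewrite !ffunE; case: (m == l); case: (m == k).
Qed.

Lemma cle_refl n (x : cube n) : cle x x.
Proof. by apply/forallP=> m; apply/implyP. Qed.

Lemma cle_adde_out n (y x : cube n) k : x k = false -> cle (adde y k) x = false.
Proof. by move=> xk; apply/negbTE/negP=> /forallP /(_ k); rewrite ffunE eqxx xk. Qed.

Section DecreaseOnDownSet.

Variables (R : realFieldType) (n : nat) (f : cube n -> R) (S : cube n -> bool).
Variable c : R.
Hypothesis S_down : forall y k, S (adde y k) -> S y.
Hypothesis S_join : forall y k l, S (adde y k) -> S (adde y l) -> S (adde (adde y k) l).

Lemma S_down2 y k l : S (adde (adde y k) l) -> S (adde y l).
Proof. by rewrite adde_comm; apply: S_down. Qed.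

Lemma defect_decr_on_le y k l :
  0 <= c -> defect (decr_on f S c) y k l <= defect f y k l.
Proof.
rewrite /defect /decr_on => c_ge0.
have : [&& S (adde y k) ==> S y, S (adde y l) ==> S y,
   S (adde (adde y k) l) ==> S (adde y k), S (adde (adde y k) l) ==> S (adde y l)
 & S (adde y k) && S (adde y l) ==> S (adde (adde y k) l)].
  apply/and5P; split; apply/implyP; [exact: S_down | exact: S_down |
    exact: S_down | exact: S_down2 | by case/andP; apply: S_join].
case: (S y); case: (S (adde y k)); case: (S (adde y l));
  case: (S (adde (adde y k) l)) => //= _; lra.
Qed.

Lemma violated_decr_on y k l :
  0 <= c -> violated (decr_on f S c) y k l -> violated f y k l.
Proof.
move=> c_ge0 /violatedE[kl yk yl lt0]; apply/violatedE; split=> //.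
exact: lt_le_trans lt0 (defect_decr_on_le _ _ _ c_ge0).
Qed.

Lemma defect_decr_on_bottom x i j :
  S x -> ~~ S (adde x i) -> ~~ S (adde x j) ->
  defect (decr_on f S c) x i j = defect f x i j - c.
Proof.
move=> Sx /negbTE Sxi /negbTE Sxj.
have Sxij : S (adde (adde x i) j) = false.
  by apply/negbTE/negP=> /S_down; rewrite Sxi.
rewrite /defect /decr_on Sx Sxi Sxj Sxij; lra.
Qed.

End DecreaseOnDownSet.

Theorem lemma2 (R : realFieldType) (n : nat) (f : cube n -> R)
    (x : cube n) (i j : 'I_n) :
  violated f x i j ->
  exists (S : cube n -> bool) (c : R),
    [/\ (S = (fun y => cle y x)) \/
        (S = (fun y => cle (adde (adde x i) j) y)),
      0 < c,
      ~ violated (decr_on f S c) x i j &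
      forall (y : cube n) (k l : 'I_n),
        violated (decr_on f S c) y k l -> violated f y k l].
Proof.
move=> /violatedE[ij xi xj defect_gt0].
pose S y := cle y x.
have S_down y k : S (adde y k) -> S y by apply: cle_adde.
have S_join y k l : S (adde y k) -> S (adde y l) -> S (adde (adde y k) l).
  exact: cle_adde_join.
exists S, (defect f x i j); split=> //; first by left.
- case/violatedE=> _ _ _.
  rewrite defect_decr_on_bottom ?subrr ?ltxx //; first exact: cle_refl.
  + by rewrite /S /= cle_adde_out.
  + by rewrite /S /= cle_adde_out.
- by move=> y k l; apply: violated_decr_on => //; apply: ltW.
Qed.
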